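(* In the setting of the context, the elliptic Euler–Moulton solution $q_i(t)=r(t)R(\theta(t))a_i$, $p_i=m_i\dot q_i$ ($1\le i\le n$), corresponds in the barred coordinates to the constant solution $$\xi_0:\quad \bar Z=(0,\sigma)^T,\ \bar z=(\sigma,0)^T,\ \bar W_l=\bar w_l=(0,0)^T\ (1\le l\le n-2)$$ of Hamilton's equations of $\bar H$. Moreover the Hessian $B(\theta)$ of $\bar H(\theta,\cdot)$ with respect to $(\bar Z,\bar W_1,\dots,\bar W_{n-2},\bar z,\bar w_1,\dots,\bar w_{n-2})$ at $\xi_0$ has the following $2\times2$ blocks: $\bar H_{\bar Z\bar Z}=\bar H_{\bar W_l\bar W_l}=I_2$; $\bar H_{\bar Z\bar z}=\bar H_{\bar W_l\bar w_l}=-J$; $\bar H_{\bar z\bar Z}=\bar H_{\bar w_l\bar W_l}=J$; $$\bar H_{\bar z\bar z}=\begin{pmatrix}-\frac{2-e\cos\theta}{1+e\cos\theta}&0\\0&1\end{pmatrix},\qquad \bar H_{\bar w_l\bar w_l}=\begin{pmatrix}-\frac{2\beta_l+2-e\cos\theta}{1+e\cos\theta}&0\\0&\frac{\beta_l+1+e\cos\theta}{1+e\cos\theta}\end{pmatrix}\ (1\le l\le n-2),$$ with $\beta_l=-\lambda_{l+2}/\mu$, and all other blocks (in particular $\bar H_{\bar z\bar w_l}$, $\bar H_{\bar w_l\bar w_s}$ for $l\ne s$, $\bar H_{\bar Z\bar W_l}$, $\bar H_{\bar Z\bar w_l}$, etc.) are zero. Hence the linearized Hamiltonian system at $\xi_0$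 has quadratic Hamiltonian $$H_2=\tfrac12|\bar Z|^2+\bar z\cdot J\bar Z+\tfrac12\bar z^T\bar H_{\bar z\bar z}\bar z+\sum_{l=1}^{n-2}\Big(\tfrac12|\bar W_l|^2+\bar w_l\cdot J\bar W_l+\tfrac12\bar w_l^T\bar H_{\bar w_l\bar w_l}\bar w_l\Big).$$
   Context: Masses $m_i>0$, $\sum m_i=1$; $a_i=(a_{ix},0)^T$ with $a_{1x}<\dots<a_{nx}$ the collinear central configuration normalized by $\sum m_ia_{ix}=0$, $\sum m_ia_{ix}^2=1$, satisfying $\sum_{j\ne i}m_j(a_{jx}-a_{ix})/|a_{jx}-a_{ix}|^3=\mu a_{ix}$, $\mu=\sum_{i<j}m_im_j/|a_{ix}-a_{jx}|$. $\tilde M=\mathrm{diag}(m_i)$, $B_{ij}=m_im_j/|a_{ix}-a_{jx}|^3$ ($i\ne j$), $B_{ii}=-\sum_{j\ne i}B_{ij}$, $D=\mu I_n+\tilde M^{-1}B$ with eigenvalues $\mu>0\ge\lambda_3\ge\dots\ge\lambda_n$ (besides $\mu$ and $0$), and eigenvectors $v_k=(b_{1k},\dots,b_{nk})^T$ for $\lambda_k$ ($3\le k\le n$) with $v_i^T\tilde Mv_j=\delta_{ij}$ together with $v_1=(1,\dots,1)^T$, $v_2=(a_{1x},\dots,a_{nx})^T$. $U(z,w_1,\dots,w_{n-2})=\sum_{i<j}m_im_j/|(a_{ix}-a_{jx})z+\sum_{k=3}^n(b_{ik}-b_{jk})w_{k-2}|$. $e\in[0,1)$, $p>0$, $\sigma=(\mu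 p)^{1/4}$, $r(t)=p/(1+e\cos\theta(t))$ with $r^2\dot\theta=\sigma^2$; the barred coordinates are defined from $q_i=a_{ix}z+\sum_kb_{ik}w_{k-2}$, $p_i=m_i(a_{ix}Z+\sum_kb_{ik}W_{k-2})$ by $x=\frac{r}{\sigma}R(\theta)\bar x$, $X=R(\theta)(\frac{\sigma}{r}\bar X+\frac{\dot r}{\sigma}\bar x)$ for $(x,X)\in\{(z,Z),(w_l,W_l)\}$, with $\theta$ as independent variable and Hamiltonian $\bar H=\tfrac12(|\bar Z|^2+\sum|\bar W_k|^2)+(\bar z\cdot J\bar Z+\sum\bar w_k\cdot J\bar W_k)+\frac{p-r(\theta)}{2p}(|\bar z|^2+\sum|\bar w_k|^2)-\frac{r(\theta)}{\sigma}U(\bar z,\bar w)$, $r(\theta)=p/(1+e\cos\theta)$. $J=\begin{pmatrix}0&-1\\1&0\end{pmatrix}$, $R(\theta)$ the rotation matrix by $\theta$. *)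

From Stdlib Require Import Reals Lra List.
Open Scope R_scope.

Fixpoint sumR (N : nat) (f : nat -> R) : R :=
  match N with O => 0 | S k => sumR k f + f k end.

Definition R2 : Type := (R * R)%type.
Definition add2 (u v : R2) : R2 := (fst u + fst v, snd u + snd v).
Definition scal2 (k : R) (u : R2) : R2 := (k * fst u, k * snd u).
Definition dot2 (u v : R2) : R := fst u * fst v + snd u * snd v.
Definition norm2 (u : R2) : R := sqrt (dot2 u u).
Definition Jmul (u : R2) : R2 := (- snd u, fst u).
Definition rot (t : R) (u : R2) : R2 :=
  (cos t * fst u - sin t * snd u, sin t * fst u + cos t * snd u).
Definition sum2 (N : nat) (f : nat -> R2) : R2 :=
  (sumR N (fun l => fst (f l)), sumR N (fun l => snd (f l))).

Inductive comp := C1 | C2.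
Definition getc (c : comp) (u : R2) : R := match c with C1 => fst u | C2 => snd u end.
Definition addc (c : comp) (h : R) (u : R2) : R2 :=
  match c with C1 => (fst u + h, snd u) | C2 => (fst u, snd u + h) end.
Definition deltac (c d : comp) : R :=
  match c, d with C1, C1 => 1 | C2, C2 => 1 | _, _ => 0 end.
Definition Jent (c d : comp) : R :=
  match c, d with C1, C2 => -1 | C2, C1 => 1 | _, _ => 0 end.
Definition mJent (c d : comp) : R := - Jent c d.

(* ---------- the collinear central configuration data ----------
   indices of bodies are 0..n-1 (paper: 1..n);
   eigen-indices k are 0..n-3 (paper: k+3, i.e. lambda_{k+3}, v_{k+3}). *)
Definition mu_cc (n : nat) (m a : nat -> R) : R :=
  sumR n (fun j => sumR j (fun i => m i * m j / Rabs (a i - a j))).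

Definition is_central (n : nat) (m a : nat -> R) : Prop :=
  forall i, (i < n)%nat ->
    sumR n (fun j => if Nat.eqb j i then 0
                     else m j * (a i - a j) / Rabs (a i - a j) ^ 3)
    = mu_cc n m a * a i.

Definition Bmat (n : nat) (m a : nat -> R) (i j : nat) : R :=
  if Nat.eqb i j then
    - sumR n (fun k => if Nat.eqb k i then 0 else m i * m k / Rabs (a i - a k) ^ 3)
  else m i * m j / Rabs (a i - a j) ^ 3.

Definition Dmat (n : nat) (m a : nat -> R) (i j : nat) : R :=
  (if Nat.eqb i j then mu_cc n m a else 0) + Bmat n m a i j / m i.

Definition r_of (e p th : R) : R := p / (1 + e * cos th).
Definition sigma_of (mu p : R) : R := sqrt (sqrt (mu * p)).

(* ---------- phase space of the barred coordinates ----------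
   (Zbar, Wbar_l, zbar, wbar_l), l = 0..n-3 (paper: l = 1..n-2) *)
Record state := mkState { sZ : R2; sW : nat -> R2; sz : R2; sw : nat -> R2 }.

Inductive coord :=
| cZ (c : comp) | cW (l : nat) (c : comp) | cz (c : comp) | cw (l : nat) (c : comp).

Definition valid (N : nat) (j : coord) : Prop :=
  match j with cW l _ | cw l _ => (l < N)%nat | _ => True end.

Definition getx (s : state) (j : coord) : R :=
  match j with
  | cZ c => getc c (sZ s) | cW l c => getc c (sW s l)
  | cz c => getc c (sz s) | cw l c => getc c (sw s l) end.

Definition shift (s : state) (j : coord) (h : R) : state :=
  match j with
  | cZ c => mkState (addc c h (sZ s)) (sW s) (sz s) (sw s)
  | cW l c => mkState (sZ s) (fun l' => if Nat.eqb l' l then addc c h (sW s l') else sW s l')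
                      (sz s) (sw s)
  | cz c => mkState (sZ s) (sW s) (addc c h (sz s)) (sw s)
  | cw l c => mkState (sZ s) (sW s) (sz s)
                      (fun l' => if Nat.eqb l' l then addc c h (sw s l') else sw s l')
  end.

Definition Upot (n : nat) (m a : nat -> R) (b : nat -> nat -> R) (z : R2) (w : nat -> R2) : R :=
  sumR n (fun j => sumR j (fun i =>
    m i * m j / norm2 (add2 (scal2 (a i - a j) z)
                            (sum2 (n - 2) (fun l => scal2 (b i l - b j l) (w l)))))).

Definition Hbar (n : nat) (m a : nat -> R) (b : nat -> nat -> R) (e p : R)
    (th : R) (s : state) : R :=
  let N := (n - 2)%nat in
  let mu := mu_cc n m a in
  let sg := sigma_of mu p in
  let r := r_of e p th in
  1/2 * (dot2 (sZ s) (sZ s) + sumR N (fun l => dot2 (sW s l) (sW s l)))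
  + (dot2 (sz s) (Jmul (sZ s)) + sumR N (fun l => dot2 (sw s l) (Jmul (sW s l))))
  + (p - r) / (2 * p) * (dot2 (sz s) (sz s) + sumR N (fun l => dot2 (sw s l) (sw s l)))
  - r / sg * Upot n m a b (sz s) (sw s).

Definition partial_is (F : state -> R) (x : state) (j : coord) (d : R) : Prop :=
  derivable_pt_lim (fun h => F (shift x j h)) 0 d.

Definition second_partial_is (F : state -> R) (x : state) (k j : coord) (v : R) : Prop :=
  exists delta, 0 < delta /\ exists g : R -> R,
    (forall h, Rabs h < delta -> partial_is F (shift x k h) j (g h)) /\
    derivable_pt_lim g 0 v.

(* conjugate variable and sign in Hamilton's equations:
   d zbar/dtheta = dH/dZbar, d Zbar/dtheta = - dH/dzbar (same for w, W) *)
Definition conjc (j : coord) : coord :=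
  match j with cZ c => cz c | cW l c => cw l c | cz c => cZ c | cw l c => cW l c end.
Definition hsign (j : coord) : R :=
  match j with cZ _ | cW _ _ => -1 | _ => 1 end.

Definition is_ham_solution (H : R -> state -> R) (N : nat) (xi : R -> state) : Prop :=
  forall th j, valid N j ->
    exists d, partial_is (H th) (xi th) (conjc j) d /\
              derivable_pt_lim (fun s => getx (xi s) j) th (hsign j * d).

Definition xi0 (sg : R) : state :=
  mkState (0, sg) (fun _ => (0, 0)) (sg, 0) (fun _ => (0, 0)).

Definition unbar_pos (sg r th : R) (xb : R2) : R2 := scal2 (r / sg) (rot th xb).
Definition unbar_mom (sg r rd th : R) (xb Xb : R2) : R2 :=
  rot th (add2 (scal2 (sg / r) Xb) (scal2 (rd / sg) xb)).

Definition q_of (n : nat) (a : nat -> R) (b : nat -> nat -> R) (sg r th : R) (s : state)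
    (i : nat) : R2 :=
  add2 (scal2 (a i) (unbar_pos sg r th (sz s)))
       (sum2 (n - 2) (fun l => scal2 (b i l) (unbar_pos sg r th (sw s l)))).

Definition p_of (n : nat) (m a : nat -> R) (b : nat -> nat -> R) (sg r rd th : R) (s : state)
    (i : nat) : R2 :=
  scal2 (m i)
   (add2 (scal2 (a i) (unbar_mom sg r rd th (sz s) (sZ s)))
         (sum2 (n - 2) (fun l => scal2 (b i l) (unbar_mom sg r rd th (sw s l) (sW s l))))).

Definition Hzz (e th : R) (c d : comp) : R :=
  match c, d with
  | C1, C1 => - (2 - e * cos th) / (1 + e * cos th)
  | C2, C2 => 1
  | _, _ => 0 end.

Definition Hww (e th beta : R) (c d : comp) : R :=
  match c, d with
  | C1, C1 => - (2 * beta + 2 - e * cos th) / (1 + e * cos th)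
  | C2, C2 => (beta + 1 + e * cos th) / (1 + e * cos th)
  | _, _ => 0 end.

Definition ifeq (l l' : nat) (x : R) : R := if Nat.eqb l l' then x else 0.

Definition hessB (e th : R) (beta : nat -> R) (j k : coord) : R :=
  match j, k with
  | cZ c, cZ d => deltac c d
  | cW l c, cW l' d => ifeq l l' (deltac c d)
  | cZ c, cz d => mJent c d
  | cW l c, cw l' d => ifeq l l' (mJent c d)
  | cz c, cZ d => Jent c d
  | cw l c, cW l' d => ifeq l l' (Jent c d)
  | cz c, cz d => Hzz e th c d
  | cw l c, cw l' d => ifeq l l' (Hww e th (beta l) c d)
  | _, _ => 0
  end.

Definition coords (N : nat) : list coord :=
  cZ C1 :: cZ C2 :: cz C1 :: cz C2 ::
  flat_map (fun l => cW l C1 :: cW l C2 :: cw l C1 :: cw l C2 :: nil) (seq 0 N).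

Definition sumL (L : list coord) (f : coord -> R) : R :=
  fold_right (fun j acc => f j + acc) 0 L.

Definition quad_form (N : nat) (B : coord -> coord -> R) (s : state) : R :=
  sumL (coords N) (fun j => sumL (coords N) (fun k => getx s j * B j k * getx s k)).

Definition qf2 (M : comp -> comp -> R) (u : R2) : R :=
  getc C1 u * M C1 C1 * getc C1 u + getc C1 u * M C1 C2 * getc C2 u
  + getc C2 u * M C2 C1 * getc C1 u + getc C2 u * M C2 C2 * getc C2 u.

Definition H2 (N : nat) (e th : R) (beta : nat -> R) (s : state) : R :=
  1/2 * dot2 (sZ s) (sZ s) + dot2 (sz s) (Jmul (sZ s)) + 1/2 * qf2 (Hzz e th) (sz s)
  + sumR N (fun l => 1/2 * dot2 (sW s l) (sW s l) + dot2 (sw s l) (Jmul (sW s l))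
                     + 1/2 * qf2 (Hww e th (beta l)) (sw s l)).

(* At xi_0 every pair separation (a_i - a_j) z + sum_l (b_il - b_jl) w_l equals
   (a_i - a_j) sigma e_1, so the first and second derivatives of U there are weighted sums
   sum_{i<j} m_i m_j |a_i - a_j|^-3 (x_i - x_j) (y_i - y_j) = - x^T B y times the derivatives of
   1/|x| at e_1, whose Hessian is diag(2, -1).  The central configuration equations give
   B a = - mu M a, and the eigenvector equations give B v_k = (lambda_k - mu) M v_k; with
   M-orthonormality these sums are mu, 0 and (mu - lambda_l) delta.  Since sigma^4 = mu p, the
   gradient of Hbar at xi_0 cancels and the Hessian takes the stated form; the rest of Hbar is
   exactly quadratic, so its derivatives are read off from its polarization. *)

From Pilot Require Import Defs.
From Stdlib Require Import Reals Lra List Lia FunctionalExtensionality.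
From Coquelicot Require Import Coquelicot.
Open Scope R_scope.

Lemma sumR_ext N f g : (forall l, (l < N)%nat -> f l = g l) -> sumR N f = sumR N g.
Proof.
  induction N as [|N IH]; intros H; simpl; [reflexivity|].
  rewrite IH by (intros; apply H; lia); rewrite H by lia; reflexivity.
Qed.

Lemma sumR_eq0 N f : (forall l, (l < N)%nat -> f l = 0) -> sumR N f = 0.
Proof.
  induction N as [|N IH]; intros H; simpl; [reflexivity|].
  rewrite IH by (intros; apply H; lia); rewrite H by lia; ring.
Qed.

Lemma sumR_single N f l0 : (l0 < N)%nat ->
  (forall l, (l < N)%nat -> l <> l0 -> f l = 0) -> sumR N f = f l0.
Proof.
  induction N as [|N IH]; intros Hl0 H; simpl; [lia|].
  destruct (Nat.eq_dec l0 N) as [->|Hne].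
  - rewrite sumR_eq0; [ring|]; intros; apply H; lia.
  - rewrite IH by (try lia; intros; apply H; lia); rewrite (H N) by lia; ring.
Qed.

Lemma sumR_add N f g : sumR N (fun l => f l + g l) = sumR N f + sumR N g.
Proof. induction N as [|N IH]; simpl; [ring|]; rewrite IH; ring. Qed.

Lemma sumR_mull N c f : sumR N (fun l => c * f l) = c * sumR N f.
Proof. induction N as [|N IH]; simpl; [ring|]; rewrite IH; ring. Qed.

Lemma sumR_mulr N f c : sumR N (fun l => f l * c) = sumR N f * c.
Proof. induction N as [|N IH]; simpl; [ring|]; rewrite IH; ring. Qed.

Lemma sumR_ge0 N f : (forall l, (l < N)%nat -> 0 <= f l) -> 0 <= sumR N f.
Proof.
  induction N as [|N IH]; intros H; simpl; [lra|].
  assert (0 <= f N) by (apply H; lia).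
  enough (0 <= sumR N f) by lra; apply IH; intros; apply H; lia.
Qed.

Lemma sumR_ge_term N f l0 : (l0 < N)%nat -> (forall l, (l < N)%nat -> 0 <= f l) ->
  f l0 <= sumR N f.
Proof.
  induction N as [|N IH]; intros Hl0 H; simpl; [lia|].
  assert (HN : 0 <= f N) by (apply H; lia).
  destruct (Nat.eq_dec l0 N) as [->|Hne].
  - enough (0 <= sumR N f) by lra; apply sumR_ge0; intros; apply H; lia.
  - enough (f l0 <= sumR N f) by lra; apply IH; [lia|]; intros; apply H; lia.
Qed.

Lemma derivable_pt_lim_sumR N (F : nat -> R -> R) d x :
  (forall l, (l < N)%nat -> derivable_pt_lim (F l) x (d l)) ->
  derivable_pt_lim (fun h => sumR N (fun l => F l h)) x (sumR N d).
Proof.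
  induction N as [|N IH]; intros H; simpl.
  - apply derivable_pt_lim_const.
  - apply derivable_pt_lim_plus; [apply IH; intros|]; apply H; lia.
Qed.

Lemma derivable_pt_lim_quadratic c0 c1 c2 :
  derivable_pt_lim (fun h => c0 + h * c1 + h ^ 2 * c2) 0 c1.
Proof. apply is_derive_Reals; auto_derive; [exact I | ring]. Qed.

Lemma derivable_pt_lim_affine c0 c1 : derivable_pt_lim (fun h => c0 + h * c1) 0 c1.
Proof. apply is_derive_Reals; auto_derive; [exact I | ring]. Qed.

Lemma pair_eq (u : R2) x y : fst u = x -> snd u = y -> u = (x, y).
Proof. destruct u; simpl; intros -> ->; reflexivity. Qed.

Definition line (s d : state) (h : R) : state :=
  mkState (add2 (sZ s) (scal2 h (sZ d))) (fun l => add2 (sW s l) (scal2 h (sW d l)))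
          (add2 (sz s) (scal2 h (sz d))) (fun l => add2 (sw s l) (scal2 h (sw d l))).

Definition e2 (c : Defs.comp) : R2 := match c with Defs.C1 => (1, 0) | Defs.C2 => (0, 1) end.

Definition unit_dir (j : coord) : state :=
  let z2 : R2 := (0, 0) in
  match j with
  | cZ c => mkState (e2 c) (fun _ => z2) z2 (fun _ => z2)
  | cW l c => mkState z2 (fun l' => if Nat.eqb l' l then e2 c else z2) z2 (fun _ => z2)
  | cz c => mkState z2 (fun _ => z2) (e2 c) (fun _ => z2)
  | cw l c => mkState z2 (fun _ => z2) z2 (fun l' => if Nat.eqb l' l then e2 c else z2)
  end.

Lemma shift_line s j h : shift s j h = line s (unit_dir j) h.
Proof.
  destruct s as [Z W z w], j as [[]|l []|[]|l []]; unfold shift, line, unit_dir; simpl;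
    f_equal; try (apply functional_extensionality; intro l'; try destruct (Nat.eqb l' l));
    apply pair_eq; simpl; ring.
Qed.

Definition mode_quad (K : R) (Z z : R2) : R :=
  1/2 * dot2 Z Z + dot2 z (Jmul Z) + K * dot2 z z.

Definition mode_polar (K : R) (Z z Z' z' : R2) : R :=
  dot2 Z Z' + dot2 z (Jmul Z') + dot2 z' (Jmul Z) + 2 * K * dot2 z z'.

Definition Hquad (N : nat) (K : R) (s : state) : R :=
  mode_quad K (sZ s) (sz s) + sumR N (fun l => mode_quad K (sW s l) (sw s l)).

Definition Hquad_polar (N : nat) (K : R) (s d : state) : R :=
  mode_polar K (sZ s) (sz s) (sZ d) (sz d)
  + sumR N (fun l => mode_polar K (sW s l) (sw s l) (sW d l) (sw d l)).

Lemma mode_quad_line K Z z Z' z' h :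
  mode_quad K (add2 Z (scal2 h Z')) (add2 z (scal2 h z')) =
  mode_quad K Z z + h * mode_polar K Z z Z' z' + h ^ 2 * mode_quad K Z' z'.
Proof.
  destruct Z, z, Z', z'; unfold mode_quad, mode_polar, dot2, Jmul, add2, scal2; cbn [fst snd].
  field.
Qed.

Lemma mode_polar_line K Z z Z1 z1 Z2 z2 h :
  mode_polar K (add2 Z (scal2 h Z2)) (add2 z (scal2 h z2)) Z1 z1 =
  mode_polar K Z z Z1 z1 + h * mode_polar K Z2 z2 Z1 z1.
Proof.
  destruct Z, z, Z1, z1, Z2, z2; unfold mode_polar, dot2, Jmul, add2, scal2; cbn [fst snd].
  ring.
Qed.

Lemma Hquad_line N K s d h :
  Hquad N K (line s d h) = Hquad N K s + h * Hquad_polar N K s d + h ^ 2 * Hquad N K d.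
Proof.
  unfold Hquad, Hquad_polar, line; cbn [sZ sW sz sw].
  rewrite mode_quad_line, (sumR_ext _ _ _ (fun l _ => mode_quad_line K _ _ _ _ h)).
  rewrite !sumR_add, !sumR_mull; ring.
Qed.

Lemma Hquad_polar_line N K s d1 d2 h :
  Hquad_polar N K (line s d2 h) d1 = Hquad_polar N K s d1 + h * Hquad_polar N K d2 d1.
Proof.
  unfold Hquad_polar, line; cbn [sZ sW sz sw].
  rewrite mode_polar_line, (sumR_ext _ _ _ (fun l _ => mode_polar_line K _ _ _ _ _ _ h)).
  rewrite sumR_add, sumR_mull; ring.
Qed.

Lemma Hquad_derive N K s d :
  derivable_pt_lim (fun h => Hquad N K (line s d h)) 0 (Hquad_polar N K s d).
Proof.
  eapply derivable_pt_lim_ext; [intro h; symmetry; apply Hquad_line|].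
  apply derivable_pt_lim_quadratic.
Qed.

Lemma Hquad_polar_derive N K s d1 d2 :
  derivable_pt_lim (fun h => Hquad_polar N K (line s d2 h) d1) 0 (Hquad_polar N K d2 d1).
Proof.
  eapply derivable_pt_lim_ext; [intro h; symmetry; apply Hquad_polar_line|].
  apply derivable_pt_lim_affine.
Qed.

Lemma inv_norm_derive (c : R) (D V : R2) : 0 < dot2 D D ->
  derivable_pt_lim (fun h => c / norm2 (add2 D (scal2 h V))) 0 (c * (- dot2 D V / norm2 D ^ 3)).
Proof.
  destruct D as [x y], V as [u v]; unfold norm2, dot2, add2, scal2; cbn [fst snd]; intro Hq.
  assert (0 < sqrt (x * x + y * y)) by (apply sqrt_lt_R0; lra).
  apply is_derive_Reals; auto_derive; rewrite ?Rmult_0_l, ?Rplus_0_r;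
    try (split; lra); field; lra.
Qed.

Lemma radial_derive (D V1 V2 : R2) : 0 < dot2 D D ->
  derivable_pt_lim (fun h => dot2 (add2 D (scal2 h V2)) V1 / norm2 (add2 D (scal2 h V2)) ^ 3) 0
    (dot2 V2 V1 / norm2 D ^ 3 - 3 * dot2 D V1 * dot2 D V2 / norm2 D ^ 5).
Proof.
  destruct D as [x y], V1 as [u1 v1], V2 as [u v]; unfold norm2, dot2, add2, scal2;
    cbn [fst snd]; intro Hq.
  assert (0 < sqrt (x * x + y * y)) by (apply sqrt_lt_R0; lra).
  apply is_derive_Reals; auto_derive; rewrite ?Rmult_0_l, ?Rplus_0_r.
  - repeat split; try lra; repeat apply Rmult_integral_contrapositive_currified; lra.
  - field; lra.
Qed.

Section Potential.

Variables (n : nat) (m a : nat -> R) (b : nat -> nat -> R).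

Definition pair_sep (s : state) (i j : nat) : R2 :=
  add2 (scal2 (a i - a j) (sz s)) (sum2 (n - 2) (fun l => scal2 (b i l - b j l) (sw s l))).

Definition pairs_apart (s : state) : Prop :=
  forall i j, (i < j)%nat -> (j < n)%nat -> 0 < dot2 (pair_sep s i j) (pair_sep s i j).

Definition dUpot (s d : state) : R :=
  sumR n (fun j => sumR j (fun i => m i * m j *
    (- dot2 (pair_sep s i j) (pair_sep d i j) / norm2 (pair_sep s i j) ^ 3))).

Definition d2Upot (s d1 d2 : state) : R :=
  sumR n (fun j => sumR j (fun i => m i * m j *
    - (dot2 (pair_sep d2 i j) (pair_sep d1 i j) / norm2 (pair_sep s i j) ^ 3
       - 3 * dot2 (pair_sep s i j) (pair_sep d1 i j) * dot2 (pair_sep s i j) (pair_sep d2 i j)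
           / norm2 (pair_sep s i j) ^ 5))).

Lemma pair_sep_line s d h i j :
  pair_sep (line s d h) i j = add2 (pair_sep s i j) (scal2 h (pair_sep d i j)).
Proof.
  unfold pair_sep, sum2, line; cbn [sz sw].
  unfold add2, scal2; cbn [fst snd]; f_equal;
    match goal with |- _ + sumR ?N (fun l => @?c l * (@?x l + h * @?y l)) = _ =>
      rewrite (sumR_ext N _ (fun l => c l * x l + h * (c l * y l))) by (intros; ring) end;
    rewrite sumR_add, sumR_mull; ring.
Qed.

Lemma Upot_derive s d : pairs_apart s ->
  derivable_pt_lim (fun h => Upot n m a b (sz (line s d h)) (sw (line s d h))) 0 (dUpot s d).
Proof.
  intros Hs.
  apply derivable_pt_lim_ext with (f := fun h => sumR n (fun j => sumR j (fun i =>
      m i * m j / norm2 (add2 (pair_sep s i j) (scal2 h (pair_sep d i j)))))).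
  - intros h; apply sumR_ext; intros j _; apply sumR_ext; intros i _.
    rewrite <- pair_sep_line; reflexivity.
  - apply derivable_pt_lim_sumR; intros j Hj; apply derivable_pt_lim_sumR; intros i Hi.
    apply inv_norm_derive, Hs; assumption.
Qed.

Lemma dUpot_derive s d1 d2 : pairs_apart s ->
  derivable_pt_lim (fun h => dUpot (line s d2 h) d1) 0 (d2Upot s d1 d2).
Proof.
  intros Hs.
  apply derivable_pt_lim_ext with (f := fun h => sumR n (fun j => sumR j (fun i => m i * m j *
      - (dot2 (add2 (pair_sep s i j) (scal2 h (pair_sep d2 i j))) (pair_sep d1 i j)
         / norm2 (add2 (pair_sep s i j) (scal2 h (pair_sep d2 i j))) ^ 3)))).
  - intros h; unfold dUpot; apply sumR_ext; intros j _; apply sumR_ext; intros i _.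
    rewrite pair_sep_line; unfold Rdiv; ring.
  - apply derivable_pt_lim_sumR; intros j Hj; apply derivable_pt_lim_sumR; intros i Hi.
    apply derivable_pt_lim_scal, derivable_pt_lim_opp, radial_derive, Hs; assumption.
Qed.

End Potential.

Section HamiltonianDerivatives.

Variables (n : nat) (m a : nat -> R) (b : nat -> nat -> R) (e p th : R).

Let K := (p - r_of e p th) / (2 * p).
Let c := r_of e p th / sigma_of (mu_cc n m a) p.

Lemma Hbar_split s :
  Hbar n m a b e p th s = Hquad (n - 2) K s - c * Upot n m a b (sz s) (sw s).
Proof.
  unfold Hbar, Hquad, mode_quad; cbv zeta; fold K c.
  rewrite !sumR_add, !sumR_mull; field.
Qed.

Definition dHbar (s d : state) : R :=
  Hquad_polar (n - 2) K s d - c * dUpot n m a b s d.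

Definition d2Hbar (s d1 d2 : state) : R :=
  Hquad_polar (n - 2) K d2 d1 - c * d2Upot n m a b s d1 d2.

Lemma Hbar_derive s d : pairs_apart n a b s ->
  derivable_pt_lim (fun h => Hbar n m a b e p th (line s d h)) 0 (dHbar s d).
Proof.
  intros Hs; eapply derivable_pt_lim_ext; [intro h; symmetry; apply Hbar_split|].
  apply derivable_pt_lim_minus; [apply Hquad_derive|].
  apply derivable_pt_lim_scal, Upot_derive, Hs.
Qed.

Lemma dHbar_derive s d1 d2 : pairs_apart n a b s ->
  derivable_pt_lim (fun h => dHbar (line s d2 h) d1) 0 (d2Hbar s d1 d2).
Proof.
  intros Hs; apply derivable_pt_lim_minus; [apply Hquad_polar_derive|].
  apply derivable_pt_lim_scal, dUpot_derive, Hs.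
Qed.

End HamiltonianDerivatives.

Lemma uniform_radius N (P : nat -> R -> Prop) :
  (forall i, (i < N)%nat -> exists d, 0 < d /\ forall h, Rabs h < d -> P i h) ->
  exists d, 0 < d /\ forall h, Rabs h < d -> forall i, (i < N)%nat -> P i h.
Proof.
  induction N as [|N IH]; intros H.
  - exists 1; split; [lra | intros; lia].
  - destruct IH as [d1 [Hd1 H1]]; [intros; apply H; lia|].
    destruct (H N) as [d2 [Hd2 H2]]; [lia|].
    exists (Rmin d1 d2); split; [apply Rmin_pos; assumption|].
    intros h Hh i Hi.
    assert (Rabs h < d1) by (eapply Rlt_le_trans; [exact Hh | apply Rmin_l]).
    assert (Rabs h < d2) by (eapply Rlt_le_trans; [exact Hh | apply Rmin_r]).
    destruct (Nat.eq_dec i N) as [->|]; [apply H2 | apply H1; [|lia]]; assumption.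
Qed.

Lemma axis_perturb_nonzero x (V : R2) : x <> 0 ->
  exists d, 0 < d /\ forall h, Rabs h < d ->
    0 < dot2 (add2 (x, 0) (scal2 h V)) (add2 (x, 0) (scal2 h V)).
Proof.
  intros Hx; destruct V as [u v].
  assert (Hax : 0 < Rabs x) by (apply Rabs_pos_lt; assumption).
  assert (Hu : 0 <= Rabs u) by apply Rabs_pos.
  exists (Rabs x / (1 + Rabs u)); split; [apply Rdiv_lt_0_compat; lra|].
  intros h Hh; unfold dot2, add2, scal2; cbn [fst snd].
  assert (Hhu : Rabs (h * u) < Rabs x).
  { rewrite Rabs_mult.
    apply (Rmult_lt_compat_r (1 + Rabs u)) in Hh; [|lra].
    unfold Rdiv in Hh; rewrite Rmult_assoc, Rinv_l, Rmult_1_r in Hh by lra.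
    assert (0 <= Rabs h) by apply Rabs_pos; nra. }
  assert (Hne : x + h * u <> 0).
  { intro E; replace (h * u) with (- x) in Hhu by lra; rewrite Rabs_Ropp in Hhu; lra. }
  pose proof (Rsqr_pos_lt _ Hne); unfold Rsqr in *; nra.
Qed.

Section AtCollinearState.

Variables (n : nat) (m a : nat -> R) (b : nat -> nat -> R) (sg : R).
Hypothesis sg_pos : 0 < sg.
Hypothesis a_incr : forall i j, (i < j)%nat -> (j < n)%nat -> a i < a j.

Definition sep_coef (jj : coord) (i j : nat) : R :=
  match jj with cz _ => a i - a j | cw l _ => b i l - b j l | _ => 0 end.

Definition coord_axis (jj : coord) : R2 :=
  match jj with cZ c | cW _ c | cz c | cw _ c => e2 c end.

Definition pair_weight (i j : nat) : R := m i * m j / Rabs (a i - a j) ^ 3.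

Definition pair_form (f g : nat -> nat -> R) : R :=
  sumR n (fun j => sumR j (fun i => pair_weight i j * f i j * g i j)).

Lemma pair_form_sym f g : pair_form f g = pair_form g f.
Proof. unfold pair_form; apply sumR_ext; intros; apply sumR_ext; intros; ring. Qed.

Lemma pair_form_0l g : pair_form (fun _ _ => 0) g = 0.
Proof. unfold pair_form; apply sumR_eq0; intros; apply sumR_eq0; intros; ring. Qed.

Lemma pair_sep_xi0 i j : pair_sep n a b (xi0 sg) i j = ((a i - a j) * sg, 0).
Proof.
  unfold pair_sep, xi0, sum2, add2, scal2; cbn [sz sw fst snd].
  apply pair_eq; cbn [fst snd]; rewrite sumR_eq0 by (intros; ring); ring.
Qed.

Lemma pair_sep_unit_dir jj i j : valid (n - 2) jj ->
  pair_sep n a b (unit_dir jj) i j = scal2 (sep_coef jj i j) (coord_axis jj).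
Proof.
  intros Hv; destruct jj as [c|l c|c|l c]; cbn [valid] in Hv;
    unfold pair_sep, unit_dir, sum2, add2, scal2, sep_coef, coord_axis; cbn [sz sw fst snd];
    apply pair_eq; cbn [fst snd].
  all: first
    [ rewrite sumR_eq0 by (intros; ring); destruct c; cbn; ring
    | rewrite (sumR_single _ _ l Hv), Nat.eqb_refl;
        [ destruct c; cbn; ring
        | intros l' _ Hne; rewrite (proj2 (Nat.eqb_neq l' l) Hne); cbn; ring ] ].
Qed.

Lemma pair_sep_xi0_nonzero i j : (i < j)%nat -> (j < n)%nat -> (a i - a j) * sg <> 0.
Proof.
  intros Hij Hj; specialize (a_incr i j Hij Hj).
  apply Rmult_integral_contrapositive_currified; lra.
Qed.

Lemma pairs_apart_xi0 : pairs_apart n a b (xi0 sg).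
Proof.
  intros i j Hij Hj; rewrite pair_sep_xi0; unfold dot2; cbn [fst snd].
  pose proof (Rsqr_pos_lt _ (pair_sep_xi0_nonzero i j Hij Hj)); unfold Rsqr in *; lra.
Qed.

Lemma pairs_apart_near_xi0 d :
  exists delta, 0 < delta /\ forall h, Rabs h < delta -> pairs_apart n a b (line (xi0 sg) d h).
Proof.
  destruct (uniform_radius n (fun j h => forall i, (i < j)%nat ->
      0 < dot2 (pair_sep n a b (line (xi0 sg) d h) i j) (pair_sep n a b (line (xi0 sg) d h) i j)))
    as [delta [Hdelta H]].
  - intros j Hj; apply uniform_radius; intros i Hi.
    destruct (axis_perturb_nonzero _ (pair_sep n a b d i j) (pair_sep_xi0_nonzero i j Hi Hj))
      as [d0 [Hd0 H0]].
    exists d0; split; [assumption|]; intros h Hh.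
    rewrite pair_sep_line, pair_sep_xi0; apply H0, Hh.
  - exists delta; split; [assumption|]; intros h Hh i j Hij Hj; apply H; assumption.
Qed.

Lemma norm2_axis x : norm2 (x * sg, 0) = Rabs x * sg.
Proof.
  unfold norm2, dot2; cbn [fst snd].
  replace (x * sg * (x * sg) + 0 * 0) with (Rsqr (x * sg)) by (unfold Rsqr; ring).
  rewrite sqrt_Rsqr_abs, Rabs_mult, (Rabs_pos_eq sg) by lra; reflexivity.
Qed.

Lemma dUpot_xi0 jj : valid (n - 2) jj ->
  dUpot n m a b (xi0 sg) (unit_dir jj) =
  - pair_form (fun i j => a i - a j) (sep_coef jj) * fst (coord_axis jj) / sg ^ 2.
Proof.
  intros Hv; unfold dUpot, pair_form, pair_weight.
  set (k := - fst (coord_axis jj) / sg ^ 2).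
  transitivity (sumR n (fun j => k * sumR j (fun i =>
    m i * m j / Rabs (a i - a j) ^ 3 * (a i - a j) * sep_coef jj i j))).
  2: { rewrite sumR_mull; unfold k, Rdiv; ring. }
  apply sumR_ext; intros j Hj; rewrite <- sumR_mull; apply sumR_ext; intros i Hi.
  rewrite pair_sep_xi0, pair_sep_unit_dir, norm2_axis by assumption.
  pose proof (a_incr i j Hi Hj).
  assert (Rabs (a i - a j) <> 0) by (apply Rabs_no_R0; lra).
  unfold k; destruct (coord_axis jj) as [u v]; unfold dot2, scal2; cbn [fst snd].
  field; lra.
Qed.

(* [dot2 v u - 3 u_x v_x] is minus the Hessian of [1/|x|] at [x = e_1], as a bilinear form. *)
Definition axial_hess (u v : R2) : R := dot2 v u - 3 * fst u * fst v.

Lemma d2Upot_xi0 j1 j2 : valid (n - 2) j1 -> valid (n - 2) j2 ->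
  d2Upot n m a b (xi0 sg) (unit_dir j1) (unit_dir j2) =
  - pair_form (sep_coef j1) (sep_coef j2) * axial_hess (coord_axis j1) (coord_axis j2) / sg ^ 3.
Proof.
  intros Hv1 Hv2; unfold d2Upot, pair_form, pair_weight.
  set (k := - axial_hess (coord_axis j1) (coord_axis j2) / sg ^ 3).
  transitivity (sumR n (fun j => k * sumR j (fun i =>
    m i * m j / Rabs (a i - a j) ^ 3 * sep_coef j1 i j * sep_coef j2 i j))).
  2: { rewrite sumR_mull; unfold k, Rdiv; ring. }
  apply sumR_ext; intros j Hj; rewrite <- sumR_mull; apply sumR_ext; intros i Hi.
  rewrite pair_sep_xi0, !pair_sep_unit_dir, norm2_axis by assumption.
  pose proof (a_incr i j Hi Hj); rewrite Rabs_left by lra.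
  unfold k, axial_hess; destruct (coord_axis j1) as [u1 v1], (coord_axis j2) as [u2 v2].
  unfold dot2, scal2; cbn [fst snd].
  field; lra.
Qed.

End AtCollinearState.

Lemma pair_sum_polarize N (c : nat -> nat -> R) x y : (forall i j, c i j = c j i) ->
  sumR N (fun j => sumR j (fun i => c i j * (x i - x j) * (y i - y j))) =
  sumR N (fun i => x i * sumR N (fun j => if Nat.eqb j i then 0 else c i j * (y i - y j))).
Proof.
  intros Hc; induction N as [|N IH]; simpl; [ring|]; rewrite IH, Nat.eqb_refl.
  rewrite (sumR_ext N (fun i => x i * (_ + (if Nat.eqb N i then 0 else c i N * (y i - y N))))
    (fun i => x i * sumR N (fun j => if Nat.eqb j i then 0 else c i j * (y i - y j))
              + x i * (c i N * (y i - y N)))).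
  2: { intros i Hi; rewrite (proj2 (Nat.eqb_neq N i)) by lia; ring. }
  rewrite (sumR_ext N (fun j => if Nat.eqb j N then 0 else c N j * (y N - y j))
    (fun j => c N j * (y N - y j))).
  2: { intros j Hj; rewrite (proj2 (Nat.eqb_neq j N)) by lia; reflexivity. }
  rewrite sumR_add.
  replace (sumR N (fun i => c i N * (x i - x N) * (y i - y N))) with
    (sumR N (fun i => x i * (c i N * (y i - y N))) + x N * sumR N (fun j => c N j * (y N - y j))).
  - ring.
  - rewrite <- sumR_mull, <- sumR_add; apply sumR_ext; intros l _; rewrite (Hc N l); ring.
Qed.

Definition pair_form_value (mu : R) (lam : nat -> R) (j k : coord) : R :=
  match j, k with
  | cz _, cz _ => mu
  | cw l _, cw l' _ => ifeq l l' (mu - lam l')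
  | _, _ => 0
  end.

Section CentralConfiguration.

Variables (n : nat) (m a : nat -> R) (b : nat -> nat -> R) (lam : nat -> R).
Hypothesis m_pos : forall i, (i < n)%nat -> 0 < m i.
Hypothesis a_incr : forall i j, (i < j)%nat -> (j < n)%nat -> a i < a j.
Hypothesis central : is_central n m a.
Hypothesis eigen : forall k i, (k < n - 2)%nat -> (i < n)%nat ->
  sumR n (fun j => Dmat n m a i j * b j k) = lam k * b i k.
Hypothesis orthonormal : forall k l, (k < n - 2)%nat -> (l < n - 2)%nat ->
  sumR n (fun i => m i * b i k * b i l) = if Nat.eqb k l then 1 else 0.
Hypothesis a_b_orth : forall k, (k < n - 2)%nat -> sumR n (fun i => m i * a i * b i k) = 0.

Let mu := mu_cc n m a.

Lemma mu_cc_pos : (2 <= n)%nat -> 0 < mu.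
Proof.
  intros Hn; unfold mu, mu_cc.
  assert (Hterm : forall j i, (i < j)%nat -> (j < n)%nat -> 0 < m i * m j / Rabs (a i - a j)).
  { intros j i Hij Hj; pose proof (a_incr i j Hij Hj).
    apply Rdiv_lt_0_compat; [apply Rmult_lt_0_compat; apply m_pos; lia|].
    apply Rabs_pos_lt; lra. }
  eapply Rlt_le_trans; [| apply (sumR_ge_term n _ 1%nat); [lia|]].
  - simpl; rewrite Rplus_0_l; apply Hterm; lia.
  - intros j Hj; apply sumR_ge0; intros i Hi; left; apply Hterm; lia.
Qed.

Lemma pair_weight_sym i j : pair_weight m a i j = pair_weight m a j i.
Proof. unfold pair_weight; rewrite (Rabs_minus_sym (a i)); unfold Rdiv; ring. Qed.

Lemma Bmat_apply i y : (i < n)%nat ->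
  sumR n (fun j => Bmat n m a i j * y j) =
  - sumR n (fun j => if Nat.eqb j i then 0 else pair_weight m a i j * (y i - y j)).
Proof.
  intros Hi.
  set (T := sumR n (fun k => if Nat.eqb k i then 0 else m i * m k / Rabs (a i - a k) ^ 3)).
  rewrite (sumR_ext n _ (fun j => (if Nat.eqb j i then - T * y i else 0)
                                  + (if Nat.eqb j i then 0 else pair_weight m a i j * y j))).
  2: { intros j Hj; unfold Bmat; rewrite (Nat.eqb_sym i j).
       destruct (Nat.eqb_spec j i); [subst; fold T; ring | unfold pair_weight; ring]. }
  rewrite sumR_add, (sumR_single n _ i Hi), Nat.eqb_refl
    by (intros l _ Hne; rewrite (proj2 (Nat.eqb_neq l i) Hne); reflexivity).
  rewrite (sumR_ext n (fun j => if Nat.eqb j i then 0 else pair_weight m a i j * (y i - y j))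
     (fun j => (if Nat.eqb j i then 0 else pair_weight m a i j) * y i
               + (-1) * (if Nat.eqb j i then 0 else pair_weight m a i j * y j)))
    by (intros j _; destruct (Nat.eqb j i); ring).
  rewrite sumR_add, sumR_mulr, sumR_mull; unfold T, pair_weight; ring.
Qed.

Lemma pair_form_laplacian x y :
  pair_form n m a (fun i j => x i - x j) (fun i j => y i - y j) =
  - sumR n (fun i => x i * sumR n (fun j => Bmat n m a i j * y j)).
Proof.
  unfold pair_form.
  rewrite (pair_sum_polarize n (pair_weight m a) x y pair_weight_sym).
  match goal with |- _ = - ?S => replace (- S) with (-1 * S) by ring end.
  rewrite <- sumR_mull.
  apply sumR_ext; intros i Hi; rewrite Bmat_apply by exact Hi; ring.
Qed.

Lemma Bmat_central i : (i < n)%nat ->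
  sumR n (fun j => Bmat n m a i j * a j) = - mu * m i * a i.
Proof.
  intros Hi; rewrite Bmat_apply by exact Hi.
  replace (- mu * m i * a i) with (- (m i * (mu_cc n m a * a i))) by (unfold mu; ring).
  rewrite <- (central i Hi), <- sumR_mull; f_equal.
  apply sumR_ext; intros j _; destruct (Nat.eqb j i); unfold pair_weight, Rdiv; ring.
Qed.

Lemma Bmat_eigen k i : (k < n - 2)%nat -> (i < n)%nat ->
  sumR n (fun j => Bmat n m a i j * b j k) = m i * (lam k - mu) * b i k.
Proof.
  intros Hk Hi; pose proof (m_pos i Hi) as Hmi.
  pose proof (eigen k i Hk Hi) as E; unfold Dmat in E.
  rewrite (sumR_ext n _ (fun j => (if Nat.eqb j i then mu * b i k else 0)
                                  + / m i * (Bmat n m a i j * b j k))) in E.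
  2: { intros j _; rewrite (Nat.eqb_sym i j).
       destruct (Nat.eqb_spec j i) as [->|]; unfold mu; field; lra. }
  rewrite sumR_add, sumR_mull, (sumR_single n _ i Hi), Nat.eqb_refl in E
    by (intros j _ Hne; rewrite (proj2 (Nat.eqb_neq j i) Hne); reflexivity).
  apply (Rmult_eq_reg_l (/ m i)); [| apply Rinv_neq_0_compat; lra].
  replace (/ m i * (m i * (lam k - mu) * b i k)) with (lam k * b i k - mu * b i k)
    by (field; lra).
  lra.
Qed.

Lemma pair_form_a_a :
  pair_form n m a (fun i j => a i - a j) (fun i j => a i - a j) = mu.
Proof.
  unfold pair_form, pair_weight, mu, mu_cc.
  apply sumR_ext; intros j Hj; apply sumR_ext; intros i Hi.
  pose proof (a_incr i j Hi Hj); rewrite Rabs_left by lra.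
  field; lra.
Qed.

Lemma pair_form_b_a k : (k < n - 2)%nat ->
  pair_form n m a (fun i j => b i k - b j k) (fun i j => a i - a j) = 0.
Proof.
  intros Hk; rewrite pair_form_laplacian.
  rewrite (sumR_ext n _ (fun i => - mu * (m i * a i * b i k)))
    by (intros i Hi; rewrite Bmat_central by exact Hi; ring).
  rewrite sumR_mull, a_b_orth by exact Hk; ring.
Qed.

Lemma pair_form_b_b k l : (k < n - 2)%nat -> (l < n - 2)%nat ->
  pair_form n m a (fun i j => b i k - b j k) (fun i j => b i l - b j l) =
  ifeq k l (mu - lam l).
Proof.
  intros Hk Hl; rewrite pair_form_laplacian.
  rewrite (sumR_ext n _ (fun i => (lam l - mu) * (m i * b i k * b i l)))
    by (intros i Hi; rewrite Bmat_eigen by assumption; ring).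
  rewrite sumR_mull, orthonormal by assumption; unfold ifeq.
  destruct (Nat.eqb k l); ring.
Qed.

Lemma pair_form_sep_coef j k : valid (n - 2) j -> valid (n - 2) k ->
  pair_form n m a (sep_coef a b j) (sep_coef a b k) = pair_form_value mu lam j k.
Proof.
  intros Hj Hk; destruct j as [c|l c|c|l c], k as [d|l' d|d|l' d]; cbn [valid] in Hj, Hk;
    cbn [sep_coef pair_form_value];
    first [ apply pair_form_0l | rewrite pair_form_sym; apply pair_form_0l
          | apply pair_form_a_a | apply pair_form_b_b; assumption
          | apply pair_form_b_a; assumption
          | rewrite pair_form_sym; apply pair_form_b_a; assumption ].
Qed.

End CentralConfiguration.

Lemma sigma_of_pos mu p : 0 < mu -> 0 < p -> 0 < sigma_of mu p.
Proof. intros; unfold sigma_of; apply sqrt_lt_R0, sqrt_lt_R0; nra. Qed.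

Lemma sigma_of_pow4 mu p : 0 <= mu * p -> sigma_of mu p ^ 4 = mu * p.
Proof.
  intros H; unfold sigma_of.
  replace (sqrt (sqrt (mu * p)) ^ 4)
    with (Rsqr (sqrt (sqrt (mu * p))) * Rsqr (sqrt (sqrt (mu * p)))) by (unfold Rsqr; ring).
  rewrite Rsqr_sqrt by apply sqrt_pos; apply sqrt_sqrt, H.
Qed.

Lemma one_plus_e_cos_pos e th : 0 <= e < 1 -> 0 < 1 + e * cos th.
Proof. intros He; pose proof (COS_bound th); nra. Qed.

Lemma mode_polar_0l K Z z : mode_polar K (0, 0) (0, 0) Z z = 0.
Proof. destruct Z, z; unfold mode_polar, dot2, Jmul; cbn [fst snd]; ring. Qed.

Lemma Hquad_polar_xi0 N K sg d :
  Hquad_polar N K (xi0 sg) d = sg * (2 * K - 1) * fst (sz d).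
Proof.
  unfold Hquad_polar, xi0; cbn [sZ sW sz sw].
  rewrite sumR_eq0 by (intros; apply mode_polar_0l).
  destruct (sZ d), (sz d); unfold mode_polar, dot2, Jmul; cbn [fst snd]; ring.
Qed.

Section Linearization.

Variables (n : nat) (m a : nat -> R) (b : nat -> nat -> R) (lam : nat -> R) (e p th : R).
Hypothesis n_ge2 : (2 <= n)%nat.
Hypothesis m_pos : forall i, (i < n)%nat -> 0 < m i.
Hypothesis a_incr : forall i j, (i < j)%nat -> (j < n)%nat -> a i < a j.
Hypothesis central : is_central n m a.
Hypothesis eigen : forall k i, (k < n - 2)%nat -> (i < n)%nat ->
  sumR n (fun j => Dmat n m a i j * b j k) = lam k * b i k.
Hypothesis orthonormal : forall k l, (k < n - 2)%nat -> (l < n - 2)%nat ->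
  sumR n (fun i => m i * b i k * b i l) = if Nat.eqb k l then 1 else 0.
Hypothesis a_b_orth : forall k, (k < n - 2)%nat -> sumR n (fun i => m i * a i * b i k) = 0.
Hypothesis e_range : 0 <= e < 1.
Hypothesis p_pos : 0 < p.

Let mu := mu_cc n m a.
Let sg := sigma_of mu p.

Lemma dHbar_xi0 jj : valid (n - 2) jj -> dHbar n m a b e p th (xi0 sg) (unit_dir jj) = 0.
Proof.
  intros Hj.
  assert (Hmu : 0 < mu) by (apply mu_cc_pos; assumption).
  assert (Hsg : 0 < sg) by (apply sigma_of_pos; assumption).
  assert (Hsg4 : sg ^ 4 = mu * p) by (apply sigma_of_pow4; nra).
  pose proof (one_plus_e_cos_pos e th e_range).
  unfold dHbar; rewrite Hquad_polar_xi0, dUpot_xi0 by assumption.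
  change (fun i j => a i - a j) with (sep_coef a b (cz Defs.C1)).
  rewrite (pair_form_sep_coef n m a b lam) by (assumption || exact I); fold mu sg.
  replace mu with (sg ^ 4 / p) by (rewrite Hsg4; field; lra).
  unfold r_of; destruct jj as [[]|? []|[]|? []];
    cbn [sz unit_dir pair_form_value coord_axis e2 fst]; field; repeat split; lra.
Qed.

Lemma d2Hbar_xi0 j k : valid (n - 2) j -> valid (n - 2) k ->
  d2Hbar n m a b e p th (xi0 sg) (unit_dir j) (unit_dir k) = hessB e th (fun l => - lam l / mu) j k.
Proof.
  intros Hj Hk.
  assert (Hmu : 0 < mu) by (apply mu_cc_pos; assumption).
  assert (Hsg : 0 < sg) by (apply sigma_of_pos; assumption).
  assert (Hsg4 : sg ^ 4 = mu * p) by (apply sigma_of_pow4; nra).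
  pose proof (one_plus_e_cos_pos e th e_range).
  unfold d2Hbar; rewrite d2Upot_xi0, (pair_form_sep_coef n m a b lam) by assumption.
  (* [sg^4 = mu p] makes the potential's coefficient [r / sg * mu / sg^3] equal [r / p]. *)
  fold mu sg; replace mu with (sg ^ 4 / p) by (rewrite Hsg4; field; lra).
  (* Only the mode carrying [k] contributes to [Hquad_polar]. *)
  unfold Hquad_polar; destruct k as [d|l d|d|l d]; cbn [valid] in Hk.
  all: first
    [ rewrite sumR_eq0 by (intros; apply mode_polar_0l)
    | rewrite (sumR_single _ _ l Hk); cbn [unit_dir sW sw]; [rewrite Nat.eqb_refl |
        intros l' _ Hne; rewrite (proj2 (Nat.eqb_neq l' l) Hne); apply mode_polar_0l] ].
  all: destruct j as [c|l' c|c|l' c], c, d;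
    cbn [unit_dir sZ sW sz sw coord_axis e2 hessB pair_form_value]; unfold mJent;
    cbn [deltac Jent Hzz Hww];
    unfold ifeq;
    try (destruct (Nat.eqb_spec l' l) as [<-|Hne];
         [ rewrite ?Nat.eqb_refl
         | rewrite ?(proj2 (Nat.eqb_neq l' l) Hne), ?(proj2 (Nat.eqb_neq l l')) by congruence ]);
    unfold r_of, mode_polar, axial_hess, dot2, Jmul; cbn [fst snd];
    field; repeat split; lra.
Qed.

Lemma xi0_critical j : valid (n - 2) j -> partial_is (Hbar n m a b e p th) (xi0 sg) j 0.
Proof.
  intros Hj.
  assert (Hsg : 0 < sg) by (apply sigma_of_pos, p_pos; apply mu_cc_pos; assumption).
  pose proof (Hbar_derive n m a b e p th (xi0 sg) (unit_dir j)
                (pairs_apart_xi0 n a b sg Hsg a_incr)) as D.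
  rewrite dHbar_xi0 in D by exact Hj.
  unfold partial_is; eapply derivable_pt_lim_ext; [intro h; rewrite shift_line; reflexivity|].
  exact D.
Qed.

Lemma xi0_hessian j k : valid (n - 2) j -> valid (n - 2) k ->
  second_partial_is (Hbar n m a b e p th) (xi0 sg) k j (hessB e th (fun l => - lam l / mu) j k).
Proof.
  intros Hj Hk.
  assert (Hsg : 0 < sg) by (apply sigma_of_pos, p_pos; apply mu_cc_pos; assumption).
  destruct (pairs_apart_near_xi0 n a b sg Hsg a_incr (unit_dir k)) as [delta [Hdelta Hnear]].
  exists delta; split; [exact Hdelta|].
  exists (fun h => dHbar n m a b e p th (line (xi0 sg) (unit_dir k) h) (unit_dir j)); split.
  - intros h Hh; unfold partial_is; rewrite shift_line.
    eapply derivable_pt_lim_ext; [intro h'; rewrite shift_line; reflexivity|].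
    apply Hbar_derive, Hnear, Hh.
  - pose proof (dHbar_derive n m a b e p th (xi0 sg) (unit_dir j) (unit_dir k)
                  (pairs_apart_xi0 n a b sg Hsg a_incr)) as D.
    rewrite d2Hbar_xi0 in D by assumption; exact D.
Qed.

End Linearization.

Definition base_coords : list coord := cZ Defs.C1 :: cZ Defs.C2 :: cz Defs.C1 :: cz Defs.C2 :: nil.

Definition mode_coords (l : nat) : list coord :=
  cW l Defs.C1 :: cW l Defs.C2 :: cw l Defs.C1 :: cw l Defs.C2 :: nil.

Definition block (j : coord) : list coord :=
  match j with cZ _ | cz _ => base_coords | cW l _ | cw l _ => mode_coords l end.

Lemma sumL_app L1 L2 f : sumL (L1 ++ L2) f = sumL L1 f + sumL L2 f.
Proof. induction L1 as [|j L1 IH]; simpl; [ring|]; unfold sumL in *; simpl; rewrite IH; ring. Qed.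

Lemma sumL_modes N f :
  sumL (flat_map mode_coords (seq 0 N)) f = sumR N (fun l => sumL (mode_coords l) f).
Proof.
  induction N as [|N IH]; [reflexivity|].
  rewrite seq_S, flat_map_app, sumL_app, IH; unfold sumL; simpl; ring.
Qed.

Lemma sumL_coords N f :
  sumL (coords N) f = sumL base_coords f + sumR N (fun l => sumL (mode_coords l) f).
Proof.
  change (coords N) with (base_coords ++ flat_map mode_coords (seq 0 N)).
  rewrite sumL_app, sumL_modes; reflexivity.
Qed.

Lemma sumL_coords_ext N f g : (forall j, valid N j -> f j = g j) ->
  sumL (coords N) f = sumL (coords N) g.
Proof.
  intros H; rewrite !sumL_coords; f_equal.
  - unfold sumL; simpl; rewrite !H by exact I; reflexivity.
  - apply sumR_ext; intros l Hl; unfold sumL; simpl; rewrite !H by exact Hl; reflexivity.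
Qed.

Lemma hessB_block_sum N e th beta (x : coord -> R) j : valid N j ->
  sumL (coords N) (fun k => x j * hessB e th beta j k * x k) =
  sumL (block j) (fun k => x j * hessB e th beta j k * x k).
Proof.
  intros Hv; rewrite sumL_coords.
  destruct j as [c|l c|c|l c]; cbn [valid] in Hv; cbn [block].
  - rewrite sumR_eq0; [ring|]; intros; unfold sumL; simpl; ring.
  - rewrite (sumR_single N _ l Hv); [unfold sumL; simpl; ring|].
    intros l' _ Hne; unfold sumL; simpl; unfold ifeq.
    rewrite (proj2 (Nat.eqb_neq l l')) by congruence; ring.
  - rewrite sumR_eq0; [ring|]; intros; unfold sumL; simpl; ring.
  - rewrite (sumR_single N _ l Hv); [unfold sumL; simpl; ring|].
    intros l' _ Hne; unfold sumL; simpl; unfold ifeq.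
    rewrite (proj2 (Nat.eqb_neq l l')) by congruence; ring.
Qed.

Lemma H2_quad_form N e th beta s : H2 N e th beta s = 1/2 * quad_form N (hessB e th beta) s.
Proof.
  unfold quad_form.
  rewrite (sumL_coords_ext N _
             (fun j => sumL (block j) (fun k => getx s j * hessB e th beta j k * getx s k)))
    by (intros j Hj; apply hessB_block_sum; exact Hj).
  rewrite sumL_coords, Rmult_plus_distr_l, <- sumR_mull; unfold H2.
  rewrite (sumR_ext N _ (fun l => 1/2 * sumL (mode_coords l) (fun j =>
             sumL (block j) (fun k => getx s j * hessB e th beta j k * getx s k)))).
  2: { intros l _; unfold sumL; simpl; unfold ifeq; rewrite Nat.eqb_refl.
       unfold qf2, Hww, mJent, dot2, Jmul, Rdiv; simpl.
       (* Keeping [/ (1 + e cos th)] opaque, no nonvanishing hypothesis is needed. *)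
       set (q := / (1 + e * cos th)); field. }
  unfold sumL; simpl; unfold qf2, Hzz, mJent, dot2, Jmul, Rdiv; simpl.
  set (q := / (1 + e * cos th)); field.
Qed.

Lemma r_of_derive e p x : 0 <= e < 1 ->
  derivable_pt_lim (r_of e p) x (p * (e * sin x) / (1 + e * cos x) ^ 2).
Proof.
  intros He; pose proof (one_plus_e_cos_pos e x He).
  unfold r_of; apply is_derive_Reals; auto_derive; [lra|]; field; lra.
Qed.

Lemma orbit_derive e p ai (c : Defs.comp) x : 0 <= e < 1 ->
  derivable_pt_lim (fun y => getc c (scal2 (r_of e p y) (rot y (ai, 0)))) x
    (getc c (add2 (scal2 (p * (e * sin x) / (1 + e * cos x) ^ 2) (rot x (ai, 0)))
                  (scal2 (r_of e p x) (rot x (0, ai))))).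
Proof.
  intros He; pose proof (one_plus_e_cos_pos e x He).
  unfold r_of, scal2, add2, rot; apply is_derive_Reals.
  destruct c; cbn [getc fst snd]; auto_derive; try lra; field; lra.
Qed.

Lemma euler_moulton_xi0 n m a b e p sg theta :
  (forall i, (i < n)%nat -> 0 < m i) -> 0 < sg -> 0 <= e < 1 -> 0 < p ->
  (forall t, derivable_pt_lim theta t (sg ^ 2 / r_of e p (theta t) ^ 2)) ->
  forall t, exists rd,
    derivable_pt_lim (fun s => r_of e p (theta s)) t rd /\
    forall i, (i < n)%nat ->
      q_of n a b sg (r_of e p (theta t)) (theta t) (xi0 sg) i
        = scal2 (r_of e p (theta t)) (rot (theta t) (a i, 0)) /\
      forall c, derivable_pt_lim
                  (fun s => getc c (scal2 (r_of e p (theta s)) (rot (theta s) (a i, 0)))) t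
                  (getc c (p_of n m a b sg (r_of e p (theta t)) rd (theta t) (xi0 sg) i) / m i).
Proof.
  intros m_pos Hsg He Hp theta_deriv t.
  set (x := theta t); pose proof (one_plus_e_cos_pos e x He).
  exists (p * (e * sin x) / (1 + e * cos x) ^ 2 * (sg ^ 2 / r_of e p x ^ 2)); split.
  { apply (derivable_pt_lim_comp theta (r_of e p)); [apply theta_deriv | apply r_of_derive, He]. }
  intros i Hi; pose proof (m_pos i Hi); split.
  - unfold q_of, unbar_pos, xi0, sum2, add2, scal2, rot; cbn [sz sw fst snd].
    apply pair_eq; cbn [fst snd]; rewrite sumR_eq0 by (intros; unfold Rdiv; ring);
      unfold r_of; field; lra.
  - intros c.
    pose proof (derivable_pt_lim_comp theta _ t _ _ (theta_deriv t) (orbit_derive e p (a i) c x He))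
      as D.
    match type of D with derivable_pt_lim _ _ ?v =>
      match goal with |- derivable_pt_lim _ _ ?w => replace w with v; [exact D|] end end.
    fold x; unfold p_of, unbar_mom, xi0, sum2, add2, scal2, rot; cbn [sz sw sZ sW fst snd].
    rewrite !sumR_eq0 by (intros; unfold Rdiv; ring).
    unfold r_of; destruct c; cbn [getc fst snd]; field; repeat split; lra.
Qed.

Theorem theorem2p3 (n : nat) (m a : nat -> R) (b : nat -> nat -> R) (lam : nat -> R)
    (e p : R) (theta : R -> R) :
  (2 <= n)%nat ->
  (forall i, (i < n)%nat -> 0 < m i) ->
  sumR n m = 1 ->
  (forall i j, (i < j)%nat -> (j < n)%nat -> a i < a j) ->
  sumR n (fun i => m i * a i) = 0 ->
  sumR n (fun i => m i * a i ^ 2) = 1 ->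
  is_central n m a ->
  (* v_{k+3} = (b_{1,k},...,b_{n,k}) eigenvectors of D for lambda_{k+3} *)
  (forall k i, (k < n - 2)%nat -> (i < n)%nat ->
     sumR n (fun j => Dmat n m a i j * b j k) = lam k * b i k) ->
  (* M-orthonormality v_i^T M v_j = delta_ij *)
  (forall k l, (k < n - 2)%nat -> (l < n - 2)%nat ->
     sumR n (fun i => m i * b i k * b i l) = if Nat.eqb k l then 1 else 0) ->
  (forall k, (k < n - 2)%nat -> sumR n (fun i => m i * b i k) = 0) ->
  (forall k, (k < n - 2)%nat -> sumR n (fun i => m i * a i * b i k) = 0) ->
  (* 0 >= lambda_3 >= ... >= lambda_n *)
  (forall k, (k < n - 2)%nat -> lam k <= 0) ->
  (forall k, (S k < n - 2)%nat -> lam (S k) <= lam k) ->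
  0 <= e < 1 -> 0 < p ->
  (* true anomaly: r^2 theta' = sigma^2 *)
  (forall t, derivable_pt_lim theta t
     (sigma_of (mu_cc n m a) p ^ 2 / r_of e p (theta t) ^ 2)) ->
  let mu := mu_cc n m a in
  let sg := sigma_of mu p in
  let N := (n - 2)%nat in
  let beta := fun l => - lam l / mu in
  (* (1) the elliptic Euler-Moulton solution q_i(t) = r(t) R(theta(t)) a_i, p_i = m_i q_i'
         is the image of the constant state xi_0 *)
  (forall t, exists rd,
     derivable_pt_lim (fun s => r_of e p (theta s)) t rd /\
     forall i, (i < n)%nat ->
       q_of n a b sg (r_of e p (theta t)) (theta t) (xi0 sg) i
         = scal2 (r_of e p (theta t)) (rot (theta t) (a i, 0)) /\
       forall c, derivable_pt_lim
                   (fun s => getc c (scal2 (r_of e p (theta s)) (rot (theta s) (a i, 0)))) t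
                   (getc c (p_of n m a b sg (r_of e p (theta t)) rd (theta t) (xi0 sg) i) / m i))
  (* (2) xi_0 is a (constant) solution of Hamilton's equations of Hbar *)
  /\ is_ham_solution (Hbar n m a b e p) N (fun _ => xi0 sg)
  (* (3) the Hessian of Hbar(theta, .) at xi_0 is B(theta) *)
  /\ (forall th j k, valid N j -> valid N k ->
        second_partial_is (Hbar n m a b e p th) (xi0 sg) k j (hessB e th beta j k))
  (* (4) the corresponding quadratic Hamiltonian is H_2 *)
  /\ (forall th s, H2 N e th beta s = 1/2 * quad_form N (hessB e th beta) s).
Proof.
  intros n_ge2 m_pos _ a_incr _ _ central eigen orthonormal _ a_b_orth _ _ e_range p_pos
    theta_deriv; cbv zeta.
  assert (Hsg : 0 < sigma_of (mu_cc n m a) p)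
    by (apply sigma_of_pos, p_pos; apply mu_cc_pos; assumption).
  split; [| split; [| split]].
  - apply euler_moulton_xi0; assumption.
  - intros th j Hj; exists 0; split.
    + apply (xi0_critical n m a b lam); try assumption; destruct j; exact Hj.
    + rewrite Rmult_0_r; apply derivable_pt_lim_const.
  - intros th j k Hj Hk; apply xi0_hessian; assumption.
  - intros th s; apply H2_quad_form.
Qed.
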